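(* Let $N\in\mathbb{N}$ and $y\in\Gamma_N$. Then the group $G=\langle R,s\rangle\subset GL_3(\mathbb{R})$ stabilises $X_{N,y}(\mathbb{Z})$: for every $P\in X_{N,y}(\mathbb{Z})$, the orbit $\{g(P)\mid g\in G\}$ is contained in $X_{N,y}(\mathbb{Z})$.
   Context: $R=\frac12\begin{pmatrix}1&0&-3\\0&2&0\\1&0&1\end{pmatrix}$ and $s$ is the reflection $s(a,b,c)=(a,b,-c)$. $X_{N,y}(\mathbb{Z})=\{(a,y,b)\mid a,b\in\mathbb{Z},\ a^2+2y^2+3b^2=48N+30\}$. $I_N$ is the set of odd integers $y$ with $|y|<\sqrt{15+24N}$. For $y\in I_N$, write $y^2=3p$ or $y^2=3p+1$ with $p\in\mathbb{Z}$, set $M_y=16N+10-2p$, $\mathcal{I}_{N,y}=\{m\in\mathbb{Z}\mid|m|\le\lfloor\sqrt{48N+30-2y^2}\rfloor\}$, $\Omega_{N,y}(0)=\{m\in\mathcal{I}_{N,y}\mid m^2\equiv0\ (3),\ M_y-m^2/3\text{ is a perfect square}\}$, $\Omega_{N,y}(1)=\{m\in\mathcal{I}_{N,y}\mid m^2\equiv1\ (3),\ M_y-(m^2+2)/3\text{ is a perfect square}\}$, and $\Gamma_N=\{y\in I_N\mid\Omega_{N,y}(0)\ne\emptyset\text{ or }\Omega_{N,y}(1)\ne\emptyset\}$. *)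

From HB Require Import structures.
From mathcomp Require Import all_boot all_order all_algebra.
From mathcomp Require Import reals.
Set Implicit Arguments. Unset Strict Implicit. Unset Printing Implicit Defensive.
Import Order.TTheory GRing.Theory Num.Theory.
Local Open Scope ring_scope.

Definition mx33 {R : realType} (rows : seq (seq R)) : 'M[R]_3 :=
  \matrix_(i < 3, j < 3) nth 0 (nth [::] rows i) j.

Definition Rmat {R : realType} : 'M[R]_3 :=
  mx33 [:: [:: 1/2; 0; -3/2]; [:: 0; 1; 0]; [:: 1/2; 0; 1/2]].

Definition smat {R : realType} : 'M[R]_3 :=
  mx33 [:: [:: 1; 0; 0]; [:: 0; 1; 0]; [:: 0; 0; -1]].

Inductive inG {R : realType} : 'M[R]_3 -> Prop :=
  | inG_R : inG Rmat
  | inG_s : inG smat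
  | inG_1 : inG 1%:M
  | inG_mul g h : inG g -> inG h -> inG (g *m h)
  | inG_inv g : inG g -> inG (invmx g).

Definition ivec {R : realType} (a b c : int) : 'cV[R]_3 :=
  \col_(i < 3) nth 0 [:: a%:~R; b%:~R; c%:~R] i.

(* (a, y, b) in X_{N,y}(Z) *)
Definition inX (N : nat) (y a b : int) : Prop :=
  a ^+ 2 + 2 * y ^+ 2 + 3 * b ^+ 2 = 48 * (N%:Z) + 30.

(* I_N : odd y with |y| < sqrt(15 + 24 N), i.e. y^2 < 15 + 24 N *)
Definition inI (N : nat) (y : int) : Prop :=
  odd `|y|%N /\ y ^+ 2 < 15 + 24 * (N%:Z).

(* p with y^2 = 3p or y^2 = 3p + 1 *)
Definition pval (y : int) : int := ((y ^+ 2) %/ 3)%Z.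

Definition Mval (N : nat) (y : int) : int := 16 * (N%:Z) + 10 - 2 * pval y.

Definition is_square (x : int) : Prop := exists k : int, x = k ^+ 2.

(* m in I_{N,y} : |m| <= floor(sqrt(48N+30-2y^2)), i.e. m^2 <= 48N+30-2y^2 *)
Definition inIm (N : nat) (y m : int) : Prop :=
  m ^+ 2 <= 48 * (N%:Z) + 30 - 2 * y ^+ 2.

Definition inOmega0 (N : nat) (y m : int) : Prop :=
  inIm N y m /\ ((m ^+ 2) %% 3)%Z = 0 /\ is_square (Mval N y - ((m ^+ 2) %/ 3)%Z).

Definition inOmega1 (N : nat) (y m : int) : Prop :=
  inIm N y m /\ ((m ^+ 2) %% 3)%Z = 1 /\ is_square (Mval N y - ((m ^+ 2 + 2) %/ 3)%Z).

Definition inGamma (N : nat) (y : int) : Prop :=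
  inI N y /\ ((exists m, inOmega0 N y m) \/ (exists m, inOmega1 N y m)).

(** Identify the plane of the first and last coordinates with the Eisenstein
    integers via (a, c) |-> a + c sqrt(-3).  Then R is multiplication by the
    sixth root of unity (1 + sqrt(-3))/2 and s is complex conjugation, so every
    element of G is a unit multiplication, possibly composed with conjugation;
    these maps fix the middle coordinate, preserve the norm a^2 + 3c^2 and the
    lattice 2 Z[(1 + sqrt(-3))/2] = {(a, c) | a = c mod 2}.  Every point of
    X_{N,y}(Z) lies in that lattice because a^2 + 3c^2 is even. *)

From HB Require Import structures.
From mathcomp Require Import all_boot all_order all_algebra.
From mathcomp Require Import reals ring zify.
Set Implicit Arguments. Unset Strict Implicit. Unset Printing Implicit Defensive.
Import Order.TTheory GRing.Theory Num.Theory.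
Local Open Scope ring_scope.

(** Eisenstein integers u + v eta, eta = (1 + sqrt(-3))/2, eta^2 = eta - 1. *)

Definition eis_mul (z w : int * int) : int * int :=
  (z.1 * w.1 - z.2 * w.2, z.1 * w.2 + z.2 * w.1 + z.2 * w.2).

Definition eis_conj (z : int * int) : int * int := (z.1 + z.2, - z.2).

Definition eis_norm (z : int * int) : int := z.1 ^+ 2 + z.1 * z.2 + z.2 ^+ 2.

Lemma eis_normM z w : eis_norm (eis_mul z w) = eis_norm z * eis_norm w.
Proof. by rewrite /eis_norm /=; ring. Qed.

Lemma eis_norm_conj z : eis_norm (eis_conj z) = eis_norm z.
Proof. by rewrite /eis_norm /=; ring. Qed.

Lemma eis_mul_conj z : eis_mul z (eis_conj z) = (eis_norm z, 0).
Proof. by rewrite /eis_mul /eis_norm /=; congr pair; ring. Qed.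

Lemma sqr_add_3sqr_even (a b c : int) :
  a ^+ 2 + 3 * b ^+ 2 = 2 * c -> exists u, a = 2 * u + b.
Proof. by move=> abc; exists ((a - b) %/ 2)%Z; have := divz_eq (a - b) 2; nia. Qed.

Lemma mulmx1_invmx (R : comUnitRingType) n (A B : 'M[R]_n) :
  A *m B = 1%:M -> invmx A = B.
Proof.
by move=> AB; have [uA _] := mulmx1_unit AB; rewrite -[B](mulKmx uA) AB mulmx1.
Qed.

Section EisensteinMatrices.
Variable R : realType.

Ltac mx3_eq :=
  apply/matrixP => -[[|[|[|?]]] ?] -[[|[|[|?]]] ?] //;
  rewrite !mxE ?big_ord_recr ?big_ord0 /= ?mxE /= ?(intrD, intrM, intrN, intrB).

(** Multiplication by [z] in the coordinates (a, c) of a + c sqrt(-3). *)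
Definition eis_mx (z : int * int) : 'M[R]_3 :=
  let p : R := z.1%:~R + z.2%:~R / 2 in let q : R := z.2%:~R / 2 in
  mx33 [:: [:: p; 0; -3 * q]; [:: 0; 1; 0]; [:: q; 0; p]].

(** The lattice point 2 (u + v eta) = (2u + v) + v sqrt(-3), at height [y]. *)
Definition eis_vec (w : int * int) (y : int) : 'cV[R]_3 :=
  ivec (2 * w.1 + w.2) y w.2.

Lemma eis_mxM z w : eis_mx z *m eis_mx w = eis_mx (eis_mul z w).
Proof. by mx3_eq; field. Qed.

Lemma eis_mx1 : eis_mx (1, 0) = 1%:M.
Proof. by mx3_eq; rewrite ?mulr1n ?mulr0n; field. Qed.

Lemma Rmat_eis : Rmat = eis_mx (0, 1).
Proof. by mx3_eq; field. Qed.

Lemma smatK : smat *m smat = 1%:M :> 'M[R]_3.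
Proof. by mx3_eq; rewrite ?mulr1n ?mulr0n; field. Qed.

Lemma smat_eis_mx z : smat *m eis_mx z = eis_mx (eis_conj z) *m smat.
Proof. by mx3_eq; field. Qed.

Lemma eis_mx_vec z w y : eis_mx z *m eis_vec w y = eis_vec (eis_mul z w) y.
Proof. by mx3_eq; field. Qed.

Lemma smat_vec w y : smat *m eis_vec w y = eis_vec (eis_conj w) y.
Proof. by mx3_eq; field. Qed.

Definition eis_symmetry (g : 'M[R]_3) : Prop :=
  exists2 z, eis_norm z = 1 & g = eis_mx z \/ g = eis_mx z *m smat.

Lemma eis_symmetryM g h :
  eis_symmetry g -> eis_symmetry h -> eis_symmetry (g *m h).
Proof.
move=> [z Nz [|] ->] [w Nw [|] ->].
- by exists (eis_mul z w); [rewrite eis_normM Nz Nw | left; rewrite eis_mxM].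
- by exists (eis_mul z w); [rewrite eis_normM Nz Nw | right; rewrite mulmxA eis_mxM].
- exists (eis_mul z (eis_conj w)); first by rewrite eis_normM eis_norm_conj Nz Nw.
  by right; rewrite -mulmxA smat_eis_mx mulmxA eis_mxM.
- exists (eis_mul z (eis_conj w)); first by rewrite eis_normM eis_norm_conj Nz Nw.
  by left; rewrite -mulmxA (mulmxA smat) smat_eis_mx -mulmxA smatK mulmx1 eis_mxM.
Qed.

Lemma eis_symmetryV g : eis_symmetry g -> eis_symmetry (invmx g).
Proof.
move=> [z Nz [|] ->].
  exists (eis_conj z); first by rewrite eis_norm_conj.
  by left; apply: mulmx1_invmx; rewrite eis_mxM eis_mul_conj Nz eis_mx1.
exists z => //; right; apply: mulmx1_invmx.
by rewrite -mulmxA (mulmxA smat) smat_eis_mx -mulmxA smatK mulmx1 eis_mxM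
  eis_mul_conj Nz eis_mx1.
Qed.

Lemma inG_eis_symmetry g : inG g -> eis_symmetry g.
Proof.
elim=> {g} [| | | g h _ Gg _ Gh | g _ Gg].
- by exists (0, 1); [| left; exact: Rmat_eis].
- by exists (1, 0); [| right; rewrite eis_mx1 mul1mx].
- by exists (1, 0); [| left; rewrite eis_mx1].
- exact: eis_symmetryM.
- exact: eis_symmetryV.
Qed.

Lemma eis_symmetry_vec g w y : eis_symmetry g ->
  exists2 w', eis_norm w' = eis_norm w & g *m eis_vec w y = eis_vec w' y.
Proof.
move=> [z Nz [|] ->].
  by exists (eis_mul z w); rewrite ?eis_normM ?Nz ?mul1r ?eis_mx_vec.
exists (eis_mul z (eis_conj w)); first by rewrite eis_normM eis_norm_conj Nz mul1r.
by rewrite -mulmxA smat_vec eis_mx_vec.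
Qed.

End EisensteinMatrices.

Lemma inX_eis N y w w' : eis_norm w' = eis_norm w ->
  inX N y (2 * w.1 + w.2) w.2 -> inX N y (2 * w'.1 + w'.2) w'.2.
Proof.
have sqr_eis (v : int * int) : (2 * v.1 + v.2) ^+ 2 + 3 * v.2 ^+ 2 = 4 * eis_norm v.
  by rewrite /eis_norm; ring.
rewrite /inX => Nw Xw; have := sqr_eis w; have := sqr_eis w'; rewrite Nw; lia.
Qed.

Theorem proposition8p41 (R : realType) (N : nat) (y : int) :
  inGamma N y ->
  forall a b : int, inX N y a b ->
  forall g : 'M[R]_3, inG g ->
  exists a' b' : int, inX N y a' b' /\ g *m ivec a y b = ivec a' y b'.
Proof.
move=> _ a b Xab g /inG_eis_symmetry Gg.
have [u Eu] : exists u, a = 2 * u + b.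
  by apply: (@sqr_add_3sqr_even _ _ (24 * N%:Z + 15 - y ^+ 2)); rewrite /inX in Xab; lia.
rewrite {a}Eu in Xab *.
have [w' Nw' gw] := eis_symmetry_vec (u, b) y Gg.
by exists (2 * w'.1 + w'.2), w'.2; split; [exact: (inX_eis Nw') | exact: gw].
Qed.
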